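(* For every single-player extensive-form game $\Gamma$, $\mathrm{VoR}^{\mathrm{SC}}(\Gamma)\ge1$ for each $\mathrm{SC}\in\{\mathrm{wCDTNash},\mathrm{bCDTNash},\mathrm{wEDTNash},\mathrm{bEDTNash}\}$.
   Context: A single-player extensive-form game consists of a finite rooted tree (nodes $\mathcal H$, leaves $\mathcal Z$, actions $A_h$), nonterminal nodes belonging to Player 1 or chance (fixed distributions), utility $u_1:\mathcal Z\to\mathbb R_{\ge0}$, and a partition $\mathcal I_1$ of Player 1's nodes into infosets with common action sets $A_I$. For a node $h$, $\mathrm{obs}(h)$ is the sequence of (player, infoset, action) along the root-to-$h$ path (excluding $h$), and $\mathrm{obs}_1(h)$ its restriction to Player 1's entries. $\mathrm{pr}_1(\Gamma)$ has the same tree and utilities with each $I\in\mathcal I_1$ partitioned by $h\sim h'\iff\mathrm{obs}_1(h)=\mathrm{obs}_1(h')$. A behavioral strategy $\pi$ assigns $\pi(\cdot\mid I)\in\Delta(A_I)$; $\mathbb P(h\mid\pi)$ is the reach probability; $U_1(\pi)=\sum_z\mathbb P(z\mid\pi)u_1(z)$; $\pi^{I\mapsto\sigma}$ plays $\sigma$ at $I$ and $\pi$ elsewhere. EDT equilibrium: $\pi(\cdot\mid I)\in\arg\max_\sigma U_1(\pi^{I\mapsto\sigma})$ for all $I$. CDT equilibrium: $\pi$ is a KKT point of maximizing $U_1$ over $\prod_I\Delta(A_I)$. Let $I^{\mathrm{1st}}$ be nodes $h\in I$ with $I$ not appearing in $\mathrm{obs}(h)$, $\mathbb P(I\mid\pi)=\sum_{h\in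 I^{\mathrm{1st}}}\mathbb P(h\mid\pi)$, $\mathrm{Fr}(I\mid\pi)=\sum_{h\in I}\mathbb P(h\mid\pi)$, $U_1^{\mathrm{CDT}}(\sigma\mid\pi,I)=U_1(\pi)+\sum_{a\in A_I}(\sigma(a)-\pi(a\mid I))\partial U_1(\pi)/\partial\pi(a\mid I)$. $\pi$ is EDT-rational (resp. CDT-rational) if there are fully mixed $\pi^{(k)}\to\pi$ and $\varepsilon^{(k)}>0$, $\varepsilon^{(k)}\to0$, such that for all $k$, all $I$ with $\mathbb P(I\mid\pi^{(k)})>0$ (resp. $\mathrm{Fr}(I\mid\pi^{(k)})>0$), and all $\sigma\in\Delta(A_I)$: $(U_1(\pi^{(k),I\mapsto\sigma})-U_1(\pi^{(k)}))/\mathbb P(I\mid\pi^{(k)})\le\varepsilon^{(k)}$ (resp. $(U_1^{\mathrm{CDT}}(\sigma\mid\pi^{(k)},I)-U_1(\pi^{(k)}))/\mathrm{Fr}(I\mid\pi^{(k)})\le\varepsilon^{(k)}$). An EDT-Nash (resp. CDT-Nash) equilibrium is an EDT (resp. CDT) equilibrium realization-equivalent (same reach probabilities at all nodes) to an EDT-rational (resp. CDT-rational) strategy. $u_1(\mathrm{bX}(\cdot))$ / $u_1(\mathrm{wX}(\cdot))$ is the max / min of $U_1$ over X equilibria; $\mathrm{VoR}^{\mathrm{SC}}(\Gamma)=u_1(\mathrm{SC}(\mathrm{pr}_1(\Gamma)))/u_1(\mathrm{SC}(\Gamma))$. *)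

From HB Require Import structures.
From mathcomp Require Import all_boot all_order all_algebra.
From mathcomp Require Import boolp classical_sets reals ereal topology normedtype sequences derive.
Set Implicit Arguments. Unset Strict Implicit. Unset Printing Implicit Defensive.
Import Order.TTheory GRing.Theory Num.Theory numFieldNormedType.Exports.
Local Open Scope ring_scope.
Local Open Scope classical_set_scope.


(** Nodes are histories (sequences of actions from a finite label type [A]);
   the tree is a finite prefix-closed list of histories containing the root [::]. *)

Definition acts {A : finType} (H : seq (seq A)) (h : seq A) : {set A} :=
  [set a | rcons h a \in H].
Definition nonterm {A : finType} (H : seq (seq A)) (h : seq A) : bool :=
  (h \in H) && (acts H h != finset.set0).
Definition leaf {A : finType} (H : seq (seq A)) (h : seq A) : bool :=
  (h \in H) && (acts H h == finset.set0).

(** Infosets of Player 1 are given by a labelling [info] (labels in an eqType [I]):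
    two Player-1 nodes are in the same infoset iff they have the same label. *)
Record efg (A : finType) (I : eqType) (R : realType) := EFG {
  nodes : seq (seq A);
  nodes_uniq : uniq nodes;
  root_in : [::] \in nodes;
  prefix_closed : forall h a, rcons h a \in nodes -> h \in nodes;
  owner : seq A -> bool;  (* true: Player 1, false: chance *)
  chance : seq A -> A -> R;
  chance_ge0 : forall h a, nonterm nodes h -> ~~ owner h ->
                 a \in acts nodes h -> 0 <= chance h a;
  chance_sum1 : forall h, nonterm nodes h -> ~~ owner h ->
                 \sum_(a in acts nodes h) chance h a = 1;
  util : seq A -> R;
  util_ge0 : forall z, leaf nodes z -> 0 <= util z;
  info : seq A -> I;
  info_acts : forall h h', nonterm nodes h -> owner h -> nonterm nodes h' ->
                 owner h' -> info h = info h' -> acts nodes h = acts nodes h'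
}.

Arguments nodes {A I R}. Arguments owner {A I R}. Arguments chance {A I R}.
Arguments util {A I R}. Arguments info {A I R}.

Section Game.
Context {A : finType} {I : eqType} {R : realType}.
Implicit Types (G : efg A I R) (pi : I -> A -> R).

Definition p1node G (h : seq A) : bool := nonterm (nodes G) h && owner G h.

Definition dist (S : {set A}) (s : A -> R) : Prop :=
  (forall a, a \in S -> 0 <= s a) /\ \sum_(a in S) s a = 1.

(** behavioral strategies: pi J a = pi(a | J) *)
Definition valid G pi : Prop :=
  forall h, p1node G h -> dist (acts (nodes G) h) (pi (info G h)).
Definition fully_mixed G pi : Prop :=
  valid G pi /\
  forall h a, p1node G h -> a \in acts (nodes G) h -> 0 < pi (info G h) a.

Definition step G pi (g : seq A) (a : A) : R :=
  if owner G g then pi (info G g) a else chance G g a.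
Fixpoint reach_from G pi (g rest : seq A) : R :=
  match rest with
  | [::] => 1
  | a :: r => step G pi g a * reach_from G pi (rcons g a) r
  end.
Definition reach G pi (h : seq A) : R := reach_from G pi [::] h.

Definition U G pi : R :=
  \sum_(z <- nodes G | leaf (nodes G) z) reach G pi z * util G z.

Definition subst pi (J : I) (s : A -> R) : I -> A -> R :=
  fun J' => if J' == J then s else pi J'.

Definition dU G pi (J : I) (a : A) : R :=
  derive1 (fun t : R => U G (subst pi J (fun b => if b == a then t else pi J b)))
          (pi J a).

Definition EDT_eq G pi : Prop :=
  valid G pi /\
  forall h, p1node G h -> forall s, dist (acts (nodes G) h) s ->
    U G (subst pi (info G h) s) <= U G pi.

(** KKT point of maximizing U over the product of simplices *)
Definition CDT_eq G pi : Prop :=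
  valid G pi /\
  exists (lam : I -> R) (mu : I -> A -> R),
    forall h, p1node G h -> forall a, a \in acts (nodes G) h ->
      [/\ 0 <= mu (info G h) a, mu (info G h) a * pi (info G h) a = 0 &
          dU G pi (info G h) a + mu (info G h) a - lam (info G h) = 0].

Definition first_in G (J : I) (h : seq A) : bool :=
  [&& p1node G h, info G h == J &
      [forall i : 'I_(size h),
         ~~ (p1node G (take i h) && (info G (take i h) == J))]].

Definition PI G pi (J : I) : R :=
  \sum_(h <- nodes G | first_in G J h) reach G pi h.
Definition Fr G pi (J : I) : R :=
  \sum_(h <- nodes G | p1node G h && (info G h == J)) reach G pi h.

Definition UCDT G pi (J : I) (S : {set A}) (s : A -> R) : R :=
  U G pi + \sum_(a in S) (s a - pi J a) * dU G pi J a.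

Definition converges G (pik : nat -> I -> A -> R) pi : Prop :=
  forall h a, p1node G h -> a \in acts (nodes G) h ->
    (fun k => pik k (info G h) a) @ \oo --> pi (info G h) a.

Definition EDT_rational G pi : Prop :=
  exists (pik : nat -> I -> A -> R) (eps : nat -> R),
    [/\ forall k, fully_mixed G (pik k),
        forall k, 0 < eps k,
        eps @ \oo --> 0,
        converges G pik pi &
        forall k h, p1node G h -> 0 < PI G (pik k) (info G h) ->
          forall s, dist (acts (nodes G) h) s ->
            (U G (subst (pik k) (info G h) s) - U G (pik k))
              / PI G (pik k) (info G h) <= eps k].

Definition CDT_rational G pi : Prop :=
  exists (pik : nat -> I -> A -> R) (eps : nat -> R),
    [/\ forall k, fully_mixed G (pik k),
        forall k, 0 < eps k,
        eps @ \oo --> 0,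
        converges G pik pi &
        forall k h, p1node G h -> 0 < Fr G (pik k) (info G h) ->
          forall s, dist (acts (nodes G) h) s ->
            (UCDT G (pik k) (info G h) (acts (nodes G) h) s - U G (pik k))
              / Fr G (pik k) (info G h) <= eps k].

Definition realization_equiv G pi pi' : Prop :=
  forall h, h \in nodes G -> reach G pi h = reach G pi' h.

Definition EDT_Nash G pi : Prop :=
  EDT_eq G pi /\ exists pi', realization_equiv G pi pi' /\ EDT_rational G pi'.
Definition CDT_Nash G pi : Prop :=
  CDT_eq G pi /\ exists pi', realization_equiv G pi pi' /\ CDT_rational G pi'.

Definition eq_values G (P : efg A I R -> (I -> A -> R) -> Prop) : set R :=
  [set r | exists pi, P G pi /\ U G pi = r]%classic.

Fixpoint obs1_from G (g rest : seq A) : seq (I * A) :=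
  match rest with
  | [::] => [::]
  | a :: r => if p1node G g then (info G g, a) :: obs1_from G (rcons g a) r
              else obs1_from G (rcons g a) r
  end.
Definition obs1 G (h : seq A) : seq (I * A) := obs1_from G [::] h.

End Game.

(** pr_1(Gamma): same tree, infosets refined by obs_1 *)
Definition pr1 {A : finType} {I : eqType} {R : realType} (G : efg A I R)
  : efg A (I * seq (I * A))%type R.
Proof.
refine (@EFG A (I * seq (I * A))%type R (nodes G) (nodes_uniq G) (root_in G)
  (@prefix_closed _ _ _ G) (owner G) (chance G) (@chance_ge0 _ _ _ G)
  (@chance_sum1 _ _ _ G) (util G) (@util_ge0 _ _ _ G)
  (fun h => (info G h, obs1 G h)) _).
move=> h h' nh oh nh' oh' [e _]; exact: info_acts e.
Defined.

Inductive SC := wCDTNash | bCDTNash | wEDTNash | bEDTNash.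

Definition sc_value (c : SC) {A : finType} {I : eqType} {R : realType}
  (G : efg A I R) : R :=
  match c with
  | wCDTNash => inf (eq_values G (fun G' pi => CDT_Nash G' pi))
  | bCDTNash => sup (eq_values G (fun G' pi => CDT_Nash G' pi))
  | wEDTNash => inf (eq_values G (fun G' pi => EDT_Nash G' pi))
  | bEDTNash => sup (eq_values G (fun G' pi => EDT_Nash G' pi))
  end.

(** VoR^SC(G) = u(SC(pr1 G)) / u(SC(G)), in the extended reals with the
    conventions x/0 = +oo for x <> 0 and 0/0 = 1. *)
Definition VoR (c : SC) {A : finType} {I : eqType} {R : realType}
  (G : efg A I R) : \bar R :=
  let a := sc_value c (pr1 G) in
  let b := sc_value c G in
  if b == 0 then (if a == 0 then 1%E else +oo%E) else (a / b)%:E.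

From mathcomp Require Import all_boot all_order all_algebra.
From mathcomp Require Import boolp functions classical_sets reals ereal topology normedtype sequences derive.
From mathcomp Require Import ring lra.
Set Implicit Arguments. Unset Strict Implicit. Unset Printing Implicit Defensive.
Import Order.TTheory GRing.Theory Num.Theory numFieldNormedType.Exports.
Local Open Scope ring_scope.
Local Open Scope classical_set_scope.

(** In pr_1(G) Player 1 has perfect recall: obs_1 grows strictly at every Player-1
    node of a path, so a play meets each infoset at most once, and the probability of
    Player 1's own moves leading to a node depends only on its infoset. Hence the
    utility is affine in each local strategy, the CDT linearisation is exact and
    PI = Fr, and switching from x to tau one obs_1-layer at a time writes
    U(tau) - U(x) as a sum of per-infoset gains weighted by reach(tau). Rationality
    bounds each such gain by eps * Fr, so every EDT- or CDT-rational strategy of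
    pr_1(G) is optimal. Limits of best trembling pure profiles give an optimal
    rational strategy, and optimal strategies are EDT and CDT equilibria, so every
    Nash value of pr_1(G) is the optimum OPT. Strategies of G lift to pr_1(G) with
    the same utility, so every Nash value of G lies in [0, OPT]. *)

Lemma big_pred1_seq (R : realType) (T : eqType) (s : seq T) (c : T) (F : T -> R) :
  uniq s -> c \in s -> \sum_(j <- s | j == c) F j = F c.
Proof.
move=> us cs; rewrite big_mkcond (bigD1_seq c) //= eqxx big1 ?addr0 //.
by move=> j /negbTE ->.
Qed.

Lemma psumr_seq_eq0P (R : realType) (T : eqType) (s : seq T) (P : pred T)
    (F : T -> R) :
  (forall i, P i -> 0 <= F i) -> \sum_(i <- s | P i) F i = 0 ->
  forall i, i \in s -> P i -> F i = 0.
Proof.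
move=> F0 /eqP; rewrite psumr_eq0 // => /allP sF i /sF /implyP sFi Pi.
exact/eqP/sFi.
Qed.

Lemma dist_le1 (A : finType) (R : realType) (S : {set A}) (s : A -> R) a :
  dist S s -> a \in S -> s a <= 1.
Proof.
move=> [s0 <-] aS; rewrite (bigD1 a) //= lerDl.
by apply: sumr_ge0 => i /andP[iS _]; apply: s0.
Qed.

Lemma sum_indicator (A : finType) (R : realType) (S : {set A}) (b : A) (F : A -> R) :
  b \in S -> \sum_(a in S) (a == b)%:R * F a = F b.
Proof.
move=> bS; rewrite (bigD1 b) //= eqxx mul1r big1 ?addr0 // => a /andP[_ /negbTE ->].
by rewrite mul0r.
Qed.

Lemma dist_indicator (A : finType) (R : realType) (S : {set A}) (b : A) :
  b \in S -> dist S (fun a => (a == b)%:R : R).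
Proof.
move=> bS; split=> [a _|]; first exact: ler0n.
by under eq_bigr do rewrite -[_%:R]mulr1; rewrite sum_indicator.
Qed.

Lemma derive1_affine (R : realType) (a b c x : R) :
  derive1 (fun t : R => a + (t - b) * c) x = c.
Proof.
rewrite derive1E.
have -> : (fun t : R => a + (t - b) * c) = cst (a - b * c) + c \*: (@id R).
  by apply: funext => t; rewrite !fctE /= [c *: t]/GRing.scale /=; ring.
have : is_derive x (1 : R) (cst (a - b * c) + c \*: (@id R)) (0 + c *: 1).
  exact: is_deriveD.
by move=> D; rewrite derive_val add0r /GRing.scale /= mulr1.
Qed.

Lemma finite_recurrent (T : finType) (f : nat -> T) :
  exists t, forall j, exists k, (j <= k)%N /\ f k = t.
Proof.
apply: contrapT => /forallNP rare.
have {}rare t : exists j, forall k, (j <= k)%N -> f k != t.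
  have /existsNP[j jt] := rare t; exists j => k jk; apply/eqP => fk.
  by apply: jt; exists k.
have [bound Hbound] := choice rare.
pose K := \max_t bound t.
by have := Hbound (f K) K (leq_bigmax _); rewrite eqxx.
Qed.

Lemma sup_ge0_le (R : realType) (E : set R) (M : R) :
  (forall r, E r -> 0 <= r <= M) -> 0 <= M -> 0 <= sup E <= M.
Proof.
move=> EM M0; have [[r Er]|E0] := pselect (E !=set0); last first.
  by rewrite (_ : E = set0) ?sup0 ?lexx // predeqE => r; split=> // Er; apply: E0; exists r.
have ubE : ubound E M by move=> y /EM /andP[].
apply/andP; split; last by apply: ge_sup => //; exists r.
have /andP[r0 _] := EM r Er; apply: le_trans r0 _; apply: ub_le_sup => //; by exists M.
Qed.

Lemma inf_ge0_le (R : realType) (E : set R) (M : R) :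
  (forall r, E r -> 0 <= r <= M) -> 0 <= M -> 0 <= inf E <= M.
Proof.
move=> EM M0; have [[r Er]|E0] := pselect (E !=set0); last first.
  by rewrite (_ : E = set0) ?inf0 ?lexx // predeqE => r; split=> // Er; apply: E0; exists r.
have lbE : lbound E 0 by move=> y /EM /andP[].
apply/andP; split; first by apply: lb_le_inf => //; exists r.
have /andP[_ rM] := EM r Er; apply: le_trans rM; apply: ge_inf => //; by exists 0.
Qed.

Lemma ratio_ge1 (R : realType) (a b : R) : 0 <= b <= a ->
  (1 <= if b == 0%R then (if a == 0%R then 1 else +oo) else (a / b)%R%:E)%E.
Proof.
case/andP=> b0 ba; case: eqP => [_|/eqP bn0]; first by case: eqP => _; rewrite ?lexx ?leey.
by rewrite lee_fin ler_pdivlMr ?mul1r // lt_def bn0.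
Qed.

Section Refinement.
Variables (A : finType) (I : eqType) (R : realType) (G : efg A I R).
Local Notation G1 := (pr1 G).
Local Notation N := (nodes G).
Local Notation lab := (info (pr1 G)).
Local Notation strategy := ((I * seq (I * A))%type -> A -> R).
Local Notation P1l := [seq h <- N | p1node G h].
Implicit Types (x y tau pi : strategy) (g h z : seq A).

Lemma nodes_catl g r : g ++ r \in N -> g \in N.
Proof.
elim/last_ind: r => [|r a IH]; first by rewrite cats0.
by rewrite -rcons_cat => /prefix_closed.
Qed.

Lemma nodes_take z i : z \in N -> take i z \in N.
Proof. by rewrite -{1}(cat_take_drop i z); apply: nodes_catl. Qed.

Lemma nodes_cat_cons g a r : g ++ a :: r \in N -> nonterm N g /\ a \in acts N g.
Proof.
rewrite -cat_rcons => /nodes_catl ga.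
have aga : a \in acts N g by rewrite inE.
by split; rewrite // /nonterm (prefix_closed ga); apply/set0Pn; exists a.
Qed.

Lemma p1node_cat_take g r i : g ++ r \in N -> (i < size r)%N ->
  owner G (g ++ take i r) -> p1node G (g ++ take i r).
Proof.
case: r => // a0 r gr ir o; rewrite /p1node o andbT.
by apply: (proj1 (@nodes_cat_cons _ (nth a0 (a0 :: r) i) (drop i.+1 (a0 :: r)) _));
  rewrite -catA /= -drop_nth // cat_take_drop.
Qed.

Lemma chance_dist g : nonterm N g -> ~~ owner G g -> dist (acts N g) (chance G g).
Proof. by move=> nt no; split=> [a|]; [apply: chance_ge0 | apply: chance_sum1]. Qed.

Lemma step_dist x g : valid G1 x -> nonterm N g -> dist (acts N g) (step G1 x g).
Proof.
rewrite /step => vx nt; case o: (owner G g); first by apply: vx; rewrite /p1node nt o.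
by apply: chance_dist; rewrite ?o.
Qed.

Lemma reach_from_cat x g r1 r2 :
  reach_from G1 x g (r1 ++ r2) = reach_from G1 x g r1 * reach_from G1 x (g ++ r1) r2.
Proof.
elim: r1 g => [|a r1 IH] g /=; first by rewrite mul1r cats0.
by rewrite IH mulrA cat_rcons.
Qed.

Lemma eq_reach_from x y g r :
  (forall i, (i < size r)%N -> owner G (g ++ take i r) ->
     x (lab (g ++ take i r)) = y (lab (g ++ take i r))) ->
  reach_from G1 x g r = reach_from G1 y g r.
Proof.
elim: r g => [|a r IH] g //= xy; congr (_ * _).
  by rewrite /step; case: ifP => // o; move: (xy 0%N erefl); rewrite take0 cats0 => /(_ o) ->.
by apply: IH => i ir; rewrite cat_rcons; apply: (xy i.+1).
Qed.

Lemma reach_from_ge0_le1 x g r : valid G1 x -> g ++ r \in N ->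
  0 <= reach_from G1 x g r <= 1.
Proof.
move=> vx; elim: r g => [|a r IH] g /=; first by rewrite ler01 lexx.
move=> gar; have [nt aa] := nodes_cat_cons gar.
have /IH /andP[r0 r1] : rcons g a ++ r \in N by rewrite cat_rcons.
have D := step_dist vx nt.
by rewrite mulr_ge0 ?(proj1 D) //= -(mulr1 1) ler_pM ?(proj1 D) ?(dist_le1 D).
Qed.

Lemma obs1_from_cat g r1 r2 :
  obs1_from G g (r1 ++ r2) = obs1_from G g r1 ++ obs1_from G (g ++ r1) r2.
Proof.
elim: r1 g => [|a r1 IH] g /=; first by rewrite cats0.
by case: ifP => _; rewrite IH cat_rcons.
Qed.

Lemma obs1_cat g r : obs1 G (g ++ r) = obs1 G g ++ obs1_from G g r.
Proof. exact: obs1_from_cat. Qed.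

Lemma size_obs1_lt g a r : p1node G g ->
  (size (obs1 G g) < size (obs1 G (g ++ a :: r)))%N.
Proof. by move=> p; rewrite obs1_cat size_cat /= p /= addnS ltnS leq_addr. Qed.

Lemma size_obs1_le h : (size (obs1 G h) <= size h)%N.
Proof.
rewrite /obs1; elim: h [::] => [|a r IH] g //=.
by case: ifP => _ /=; [rewrite ltnS|apply: leqW]; apply: IH.
Qed.

Lemma size_obs1_take_lt z i : (i < size z)%N -> p1node G (take i z) ->
  (size (obs1 G (take i z)) < size (obs1 G z))%N.
Proof.
case: z => // a0 z iz p.
have -> : obs1 G (a0 :: z) =
    obs1 G (take i (a0 :: z) ++ nth a0 (a0 :: z) i :: drop i.+1 (a0 :: z)).
  by rewrite -drop_nth // cat_take_drop.
exact: size_obs1_lt.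
Qed.

Lemma eq_reach_below x y h : h \in N ->
  (forall L : I * seq (I * A), (size L.2 < size (obs1 G h))%N -> x L = y L) ->
  reach G1 x h = reach G1 y h.
Proof.
move=> hN xy; apply: eq_reach_from => i ih o; apply: xy.
by apply: size_obs1_take_lt => //; apply: (p1node_cat_take (g := [::])).
Qed.

Definition cont_value x h a :=
  \sum_(z <- N | leaf N z && prefix (rcons h a) z)
     reach_from G1 x (rcons h a) (drop (size h).+1 z) * util G z.

Definition util_total := \sum_(z <- N | leaf N z) util G z.

Lemma prefix_rcons_cat h a z : prefix (rcons h a) z -> z = h ++ a :: drop (size h).+1 z.
Proof.
by rewrite prefixE size_rcons => /eqP hz; rewrite -cat_rcons -{1}hz cat_take_drop.
Qed.

Lemma eq_cont_value_above x y h a : p1node G h ->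
  (forall L : I * seq (I * A), (size (obs1 G h) < size L.2)%N -> x L = y L) ->
  cont_value x h a = cont_value y h a.
Proof.
move=> ph xy; rewrite /cont_value big_seq_cond [RHS]big_seq_cond.
apply: eq_bigr => z /andP[zN /andP[_ hz]].
congr (_ * _); apply: eq_reach_from => i ir o; apply: xy.
rewrite cat_rcons; apply: size_obs1_lt ph.
Qed.

Lemma cont_value_ge0_le x h a : valid G1 x -> 0 <= cont_value x h a <= util_total.
Proof.
move=> vx.
have reach01 z : z \in N -> prefix (rcons h a) z ->
    0 <= reach_from G1 x (rcons h a) (drop (size h).+1 z) <= 1.
  by move=> zN hz; apply: reach_from_ge0_le1; rewrite // cat_rcons -prefix_rcons_cat.
apply/andP; split.
  rewrite /cont_value big_seq_cond sumr_ge0 // => z /andP[zN /andP[lz hz]].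
  by rewrite mulr_ge0 ?util_ge0 //; case/andP: (reach01 z zN hz).
rewrite /util_total (bigID (prefix (rcons h a))) /= -[cont_value _ _ _]addr0 lerD //.
  rewrite /cont_value big_seq_cond [X in _ <= X]big_seq_cond.
  apply: ler_sum => z /andP[zN /andP[lz hz]].
  by rewrite ler_piMl ?util_ge0 //; case/andP: (reach01 z zN hz).
by rewrite big_seq_cond sumr_ge0 // => z /andP[_ /andP[lz _]]; apply: util_ge0.
Qed.

(** * Layer decomposition of the utility *)

Definition strict_prefix h z := prefix h z && (size h < size z)%N.

Lemma strict_prefix_rcons h a z : prefix (rcons h a) z -> strict_prefix h z.
Proof.
move=> /prefixP[t ->]; rewrite /strict_prefix size_cat size_rcons addSn ltnS leq_addr.
by rewrite -cats1 -catA prefix_prefix.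
Qed.

Lemma prefix_rcons_nth h a b z : strict_prefix h z ->
  prefix (rcons h a) z = (a == nth b z (size h)).
Proof.
by case/andP=> /prefixP[t ->] hz; rewrite prefixE size_rcons (take_nth b hz) take_size_cat //
  eqseq_rcons eqxx eq_sym.
Qed.

Lemma sum_leaves_below h (F : seq A -> R) :
  \sum_(z <- N | leaf N z && strict_prefix h z) F z =
  \sum_(a in acts N h) \sum_(z <- N | leaf N z && prefix (rcons h a) z) F z.
Proof.
have -> : \sum_(a in acts N h) \sum_(z <- N | leaf N z && prefix (rcons h a) z) F z =
          \sum_a \sum_(z <- N | leaf N z && prefix (rcons h a) z) F z.
  rewrite [RHS](bigID (mem (acts N h))) /= [X in _ + X]big1 ?addr0 //.
  move=> a aN; rewrite big_seq_cond big1 // => z /andP[zN /andP[_ hz]].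
  by move: aN; rewrite inE; move: hz; rewrite prefixE => /eqP <-; rewrite nodes_take.
under [RHS]eq_bigr => a _ do rewrite big_mkcondr.
rewrite exchange_big big_mkcondr /=; apply: eq_bigr => z _.
case: (boolP (strict_prefix h z)) => [hz|nhz]; last first.
  by apply/esym/big1 => a _; case: ifP => // /strict_prefix_rcons hz; rewrite hz in nhz.
case: z hz => [|b z'] hz; first by rewrite /strict_prefix ltn0 andbF in hz.
under eq_bigr => a _ do rewrite (prefix_rcons_nth a b hz).
by rewrite -big_mkcond big_pred1_eq.
Qed.

Definition gain x h (s : A -> R) :=
  \sum_(a in acts N h) (s a - x (lab h) a) * cont_value x h a.

Section Layer.
Variables (S : pred (seq A)) (n : nat).
Hypothesis S_layer : forall h, S h -> p1node G h && (size (obs1 G h) == n).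

Definition crosses z := [exists i : 'I_(size z), S (take i z)].

(* Perfect recall: obs_1 grows strictly along z, so z meets the layer at most once. *)
Lemma crosses_uniq z i j : (i < size z)%N -> (j < size z)%N ->
  S (take i z) -> S (take j z) -> i = j.
Proof.
have ltF k l : (k < l < size z)%N -> S (take k z) -> S (take l z) -> False.
  move=> /andP[kl lz] Sk Sl.
  have /andP[pk /eqP sk] := S_layer Sk; have /andP[_ /eqP sl] := S_layer Sl.
  have kl' := ltnW kl; have lz' := ltnW lz.
  have := @size_obs1_take_lt (take l z) k.
  rewrite take_takel // size_takel // sk sl ltnn.
  by move=> /(_ kl pk).
move=> iz jz Si Sj; case: (ltngtP i j) => // [ij|ji].
  by case: (ltF i j); rewrite ?ij.
by case: (ltF j i); rewrite ?ji.
Qed.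

Lemma sum_leaves_crossing (F : seq A -> R) :
  \sum_(z <- N | leaf N z && crosses z) F z =
  \sum_(h <- N | S h) \sum_(z <- N | leaf N z && strict_prefix h z) F z.
Proof.
under [RHS]eq_bigr => h _ do rewrite big_mkcondr.
rewrite exchange_big /= big_mkcondr /= big_seq_cond [RHS]big_seq_cond.
apply: eq_bigr => z /andP[zN lz]; case: ifP => [/existsP[[k kz] /= Sk]|/negbT/existsPn nS].
  rewrite -big_mkcondr (eq_bigl (fun h => h == take k z)) ?big_pred1_seq ?nodes_uniq ?nodes_take //.
  move=> h; apply/idP/eqP => [/andP[Sh /andP[/prefixP[t zE] hz]]|->].
    suff <- : size h = k by rewrite zE take_size_cat.
    by apply: (crosses_uniq hz kz); rewrite // zE take_size_cat.
  by rewrite Sk /strict_prefix prefixE size_takel ?eqxx // ltnW.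
apply/esym/big1 => h Sh; case: ifP => // /andP[/prefixP[t zE] hz].
by have := nS (Ordinal hz); rewrite /= zE take_size_cat // Sh.
Qed.

Lemma U_layer_decomp x :
  U G1 x = \sum_(z <- N | leaf N z && ~~ crosses z) reach G1 x z * util G z +
    \sum_(h <- N | S h) reach G1 x h * \sum_(a in acts N h) x (lab h) a * cont_value x h a.
Proof.
rewrite /U (bigID crosses) /= addrC; congr (_ + _).
rewrite sum_leaves_crossing big_seq_cond [RHS]big_seq_cond; apply: eq_bigr => h /andP[hN Sh].
have /andP[/andP[_ oh] _] := S_layer Sh.
rewrite sum_leaves_below mulr_sumr; apply: eq_bigr => a aa.
rewrite /cont_value !mulr_sumr big_seq_cond [RHS]big_seq_cond.
apply: eq_bigr => z /andP[zN /andP[lz hz]].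
by rewrite {1}(prefix_rcons_cat hz) /reach reach_from_cat /= /step oh !mulrA.
Qed.

Lemma U_layer_sub x y :
  (forall L : I * seq (I * A), size L.2 != n -> x L = y L) ->
  (forall g, p1node G g -> ~~ S g -> x (lab g) = y (lab g)) ->
  U G1 y - U G1 x = \sum_(h <- N | S h) reach G1 x h * gain x h (y (lab h)).
Proof.
move=> off_layer off_S; rewrite (U_layer_decomp x) (U_layer_decomp y).
have -> : \sum_(z <- N | leaf N z && ~~ crosses z) reach G1 y z * util G z =
          \sum_(z <- N | leaf N z && ~~ crosses z) reach G1 x z * util G z.
  rewrite big_seq_cond [RHS]big_seq_cond; apply: eq_bigr => z /andP[zN /andP[_ nS]].
  congr (_ * _); apply: eq_reach_from => i iz o; apply/esym/off_S.
    exact: (p1node_cat_take (g := [::])).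
  by apply: contra nS => Si; apply/existsP; exists (Ordinal iz).
rewrite opprD addrACA subrr add0r -sumrB big_seq_cond [RHS]big_seq_cond.
apply: eq_bigr => h /andP[hN Sh].
have /andP[ph /eqP sh] := S_layer Sh.
have -> : reach G1 y h = reach G1 x h.
  by apply: eq_reach_below => // L; rewrite sh => Ln; apply/esym/off_layer; rewrite neq_ltn Ln.
rewrite -mulrBr -sumrB /gain; congr (_ * _); apply: eq_bigr => a _.
rewrite (@eq_cont_value_above y x h a ph) ?mulrBl // => L.
by rewrite sh => Ln; apply/esym/off_layer; rewrite neq_ltn Ln orbT.
Qed.

End Layer.

(** * Linearity at an information set *)

Definition in_infoset (J : I * seq (I * A)) h := p1node G h && (lab h == J).

Lemma in_infoset_layer J h : in_infoset J h -> p1node G h && (size (obs1 G h) == size J.2).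
Proof. by case/andP=> -> /eqP <-; rewrite /= eqxx. Qed.

Lemma acts_lab h h' : p1node G h -> p1node G h' -> lab h = lab h' -> acts N h = acts N h'.
Proof. by move=> /andP[n1 o1] /andP[n2 o2] [e _]; apply: info_acts. Qed.

Lemma U_subst_sub x h0 s : p1node G h0 ->
  U G1 (subst x (lab h0) s) - U G1 x =
  \sum_(h <- N | in_infoset (lab h0) h) reach G1 x h * gain x h s.
Proof.
move=> p0; rewrite (U_layer_sub (@in_infoset_layer (lab h0))); first last.
- by move=> g pg; rewrite /in_infoset pg /= /subst => /negbTE ->.
- by move=> L L0; rewrite /subst; case: eqP => // L0E; rewrite L0E eqxx in L0.
rewrite big_seq_cond [RHS]big_seq_cond; apply: eq_bigr => h /andP[_ /andP[_ /eqP->]].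
by rewrite /subst eqxx.
Qed.

Definition marginal x J a := \sum_(h <- N | in_infoset J h) reach G1 x h * cont_value x h a.

Lemma U_subst_sub_marginal x h0 s : p1node G h0 ->
  U G1 (subst x (lab h0) s) - U G1 x =
  \sum_(a in acts N h0) (s a - x (lab h0) a) * marginal x (lab h0) a.
Proof.
move=> p0; rewrite U_subst_sub //.
under [RHS]eq_bigr => a _ do rewrite /marginal mulr_sumr.
rewrite exchange_big /= big_seq_cond [RHS]big_seq_cond.
apply: eq_bigr => h /andP[hN /andP[ph /eqP lh]].
rewrite /gain mulr_sumr (acts_lab ph p0 lh) lh; apply: eq_bigr => a _; ring.
Qed.

Lemma dU_pr1 x h0 a : p1node G h0 -> a \in acts N h0 ->
  dU G1 x (lab h0) a = marginal x (lab h0) a.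
Proof.
move=> p0 aa; rewrite /dU; set J := lab h0.
under eq_fun => t.
  have := U_subst_sub_marginal x (fun b => if b == a then t else x J b) p0.
  rewrite (bigD1 a) //= eqxx big1 ?addr0 => [/eqP|b /andP[_ /negbTE ->]]; last first.
    by rewrite subrr mul0r.
  rewrite subr_eq addrC => /eqP ->.
  over.
exact: derive1_affine.
Qed.

Lemma UCDT_pr1 x h0 s : p1node G h0 ->
  UCDT G1 x (lab h0) (acts (nodes G1) h0) s = U G1 (subst x (lab h0) s).
Proof.
move=> p0; rewrite /UCDT -[RHS](subrK (U G1 x)) U_subst_sub_marginal // addrC.
by congr (_ + _); apply: eq_bigr => a aa; rewrite dU_pr1.
Qed.

Lemma eq_U x y : (forall g, p1node G g -> x (lab g) = y (lab g)) -> U G1 x = U G1 y.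
Proof.
move=> xy; rewrite /U big_seq_cond [RHS]big_seq_cond; apply: eq_bigr => z /andP[zN _].
congr (_ * _); apply: eq_reach_from => i iz o.
exact/xy/(p1node_cat_take (g := [::])).
Qed.

(* Switch from x to tau one obs_1-layer at a time. *)
Lemma performance_difference x tau :
  U G1 tau - U G1 x =
  \sum_(h <- N | p1node G h) reach G1 tau h * gain x h (tau (lab h)).
Proof.
pose mix m L := if (size L.2 < m)%N then tau L else x L.
pose M := (\max_(h <- N) size h).+1.
have obsM h : h \in N -> (size (obs1 G h) < M)%N.
  move=> hN; rewrite ltnS (leq_trans (size_obs1_le h)) //.
  exact: (@leq_bigmax_seq _ N xpredT size h hN).
have -> : U G1 tau = U G1 (mix M).
  by apply: eq_U => g /andP[/andP[gN _] _]; rewrite /mix /= obsM.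
have -> : U G1 x = U G1 (mix 0%N) by apply: eq_U.
pose F h := reach G1 tau h * gain x h (tau (lab h)).
rewrite -(telescope_sumr_eq (fun m => U G1 (mix m)) (fun m =>
  \sum_(h <- N | p1node G h && (size (obs1 G h) == m)) F h) (leq0n M)); last first.
  move=> m _; have off_layer L : size L.2 != m -> mix m L = mix m.+1 L.
    move=> Lm; have e : (size L.2 <= m)%N = (size L.2 < m)%N.
      by rewrite leq_eqVlt (negbTE Lm).
    by rewrite /mix ltnS e.
  rewrite (@U_layer_sub _ m (fun h => id)); first last.
  - by move=> g pg; rewrite pg /= => nm; apply: off_layer.
  - exact: off_layer.
  rewrite big_seq_cond [RHS]big_seq_cond; apply: eq_bigr => h /andP[hN /andP[ph /eqP sh]].
  have -> : reach G1 (mix m) h = reach G1 tau h.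
    by apply: eq_reach_below => // L; rewrite sh /mix => ->.
  rewrite /F /gain /mix /= sh ltnn ltnSn; congr (_ * _); apply: eq_bigr => a _.
  congr (_ * _); apply: eq_cont_value_above => // L.
  by rewrite sh /mix => mL; rewrite ltnNge (ltnW mL).
under eq_bigr => m _ do rewrite big_mkcondr.
rewrite exchange_big /= big_seq_cond [RHS]big_seq_cond; apply: eq_bigr => h /andP[hN _].
by rewrite -big_mkcond (eq_bigl _ _ (fun m => eq_sym _ m)) /= big_nat1_eq obsM.
Qed.

(** * Rational strategies are optimal *)

Fixpoint chance_from g r : R :=
  if r is a :: r' then (if owner G g then 1 else chance G g a) * chance_from (rcons g a) r'
  else 1.

Fixpoint obs_weight x (pre o : seq (I * A)) : R :=
  if o is p :: o' then x (p.1, pre) p.2 * obs_weight x (rcons pre p) o' else 1.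

Lemma obs1_rcons g a :
  obs1 G (rcons g a) = if p1node G g then rcons (obs1 G g) (info G g, a) else obs1 G g.
Proof. by rewrite -cats1 obs1_cat /=; case: ifP; rewrite ?cats0 ?cats1. Qed.

Lemma reach_from_factor x g r : g ++ r \in N ->
  reach_from G1 x g r = chance_from g r * obs_weight x (obs1 G g) (obs1_from G g r).
Proof.
elim: r g => [|a r IH] g /=; first by rewrite mulr1.
move=> gar; have [nt _] := nodes_cat_cons gar.
rewrite IH ?cat_rcons // obs1_rcons /step /p1node nt /=.
by case: (owner G g) => /=; ring.
Qed.

Lemma chance_from_ge0 g r : g ++ r \in N -> 0 <= chance_from g r.
Proof.
elim: r g => [|a r IH] g //= gar; have [nt aa] := nodes_cat_cons gar.
rewrite mulr_ge0 ?IH ?cat_rcons //; case: ifP => o //.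
by apply: chance_ge0; rewrite ?o.
Qed.

Lemma obs_weight_ge0 x g r : valid G1 x -> g ++ r \in N ->
  0 <= obs_weight x (obs1 G g) (obs1_from G g r).
Proof.
move=> vx; elim: r g => [|a r IH] g //= gar; have [nt aa] := nodes_cat_cons gar.
have := IH (rcons g a); rewrite cat_rcons obs1_rcons => /(_ gar).
by case: ifP => pg //= w0; rewrite mulr_ge0 // (proj1 (vx g pg)).
Qed.

Lemma obs_weight_gt0 x g r : fully_mixed G1 x -> g ++ r \in N ->
  0 < obs_weight x (obs1 G g) (obs1_from G g r).
Proof.
move=> [_ fx]; elim: r g => [|a r IH] g //= gar; have [nt aa] := nodes_cat_cons gar.
have := IH (rcons g a); rewrite cat_rcons obs1_rcons => /(_ gar).
by case: ifP => pg //= w0; rewrite mulr_gt0 // (fx g a pg aa).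
Qed.

Lemma reach_in_infoset y J h : in_infoset J h ->
  reach G1 y h = chance_from [::] h * obs_weight y [::] J.2.
Proof.
by case/andP=> /andP[/andP[hN _] _] /eqP <-; rewrite /reach reach_from_factor.
Qed.

Definition p1labels := undup (map lab [seq h <- N | p1node G h]).

Lemma sum_by_label (F : seq A -> R) :
  \sum_(h <- N | p1node G h) F h = \sum_(J <- p1labels) \sum_(h <- N | in_infoset J h) F h.
Proof.
under [RHS]eq_bigr => J _ do rewrite big_mkcondr.
rewrite exchange_big /= big_seq_cond [RHS]big_seq_cond; apply: eq_bigr => h /andP[hN ph].
rewrite -big_mkcond /= (eq_bigl _ _ (fun J => eq_sym _ J)) big_pred1_seq ?undup_uniq //.
by rewrite mem_undup map_f // mem_filter ph.
Qed.

Lemma Fr_pr1 x J : Fr G1 x J = \sum_(h <- N | in_infoset J h) reach G1 x h.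
Proof. by []. Qed.

Lemma infoset_gain_le x y h0 s eps : fully_mixed G1 x -> valid G1 y -> p1node G h0 ->
  (0 < Fr G1 x (lab h0) -> (U G1 (subst x (lab h0) s) - U G1 x) / Fr G1 x (lab h0) <= eps) ->
  \sum_(h <- N | in_infoset (lab h0) h) reach G1 y h * gain x h s <=
  eps * \sum_(h <- N | in_infoset (lab h0) h) reach G1 y h.
Proof.
move=> fx vy p0 rat; set J := lab h0; set c := chance_from [::].
(* Both the gain and Fr factor through the Player-1 weight of J, which cancels. *)
have inN h : in_infoset J h -> h \in N by case/andP=> /andP[/andP[]].
pose W := \sum_(h <- N | in_infoset J h) c h.
pose D := \sum_(h <- N | in_infoset J h) c h * gain x h s.
have gainE y' : \sum_(h <- N | in_infoset J h) reach G1 y' h * gain x h s =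
    obs_weight y' [::] J.2 * D.
  by rewrite /D mulr_sumr; apply: eq_bigr => h Jh; rewrite (reach_in_infoset y' Jh) -mulrA mulrCA.
have reachE y' : \sum_(h <- N | in_infoset J h) reach G1 y' h = obs_weight y' [::] J.2 * W.
  by rewrite /W mulr_sumr; apply: eq_bigr => h Jh; rewrite (reach_in_infoset y' Jh) mulrC.
have c0 h : in_infoset J h -> 0 <= c h by move/inN; apply: (chance_from_ge0 (g := [::])).
have h0N : h0 \in N by case/andP: p0 => /andP[].
have wx : 0 < obs_weight x [::] J.2 by apply: (obs_weight_gt0 (g := [::])).
have wy : 0 <= obs_weight y [::] J.2 by apply: (obs_weight_ge0 (g := [::])).
rewrite gainE reachE mulrCA ler_wpM2l //.
have [W0|W0] := eqVneq W 0.
  rewrite W0 mulr0 /D big_seq_cond big1 // => h /andP[hN Jh].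
  by rewrite (psumr_seq_eq0P c0 W0 hN Jh) mul0r.
have Wpos : 0 < W by rewrite lt_def W0 /W sumr_ge0.
have FrE : Fr G1 x J = obs_weight x [::] J.2 * W by rewrite Fr_pr1 reachE.
move: rat; rewrite FrE U_subst_sub // gainE mulr_gt0 // => /(_ isT).
by rewrite -mulf_div divff ?gt_eqF // mul1r ler_pdivrMr.
Qed.

Lemma U_sub_le_rational x tau eps : fully_mixed G1 x -> valid G1 tau -> 0 <= eps ->
  (forall h0, p1node G h0 -> 0 < Fr G1 x (lab h0) -> forall s, dist (acts N h0) s ->
     (U G1 (subst x (lab h0) s) - U G1 x) / Fr G1 x (lab h0) <= eps) ->
  U G1 tau - U G1 x <= eps * (size N)%:R.
Proof.
move=> fx vt e0 rat; rewrite performance_difference sum_by_label.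
apply: (@le_trans _ _ (\sum_(J <- p1labels) eps * \sum_(h <- N | in_infoset J h) reach G1 tau h)).
  rewrite big_seq [X in _ <= X]big_seq; apply: ler_sum => J.
  rewrite mem_undup => /mapP[h0]; rewrite mem_filter => /andP[p0 _] ->.
  rewrite (eq_bigr (fun h => reach G1 tau h * gain x h (tau (lab h0)))).
    by apply: infoset_gain_le => // Fp; apply: rat => //; apply: vt.
  by move=> h /andP[_ /eqP ->].
rewrite -mulr_sumr -sum_by_label ler_wpM2l // -sum1_size natr_sum.
rewrite [X in _ <= X](bigID (p1node G)) /= -[X in X <= _]addr0 lerD ?sumr_ge0 //.
rewrite big_seq_cond [X in _ <= X]big_seq_cond; apply: ler_sum => h /andP[hN _].
by case/andP: (reach_from_ge0_le1 vt (g := [::]) hN).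
Qed.

Lemma reach_from_cvg (pik : nat -> strategy) pi g r : converges G1 pik pi -> g ++ r \in N ->
  (fun k => reach_from G1 (pik k) g r) @ \oo --> reach_from G1 pi g r.
Proof.
move=> cv; elim: r g => [|a r IH] g gar /=; first exact: cvg_cst.
have [nt aa] := nodes_cat_cons gar.
apply: cvgM; last by apply: IH; rewrite cat_rcons.
rewrite /step /=; case: ifP => o; last exact: cvg_cst.
by apply: cv; rewrite // /p1node nt.
Qed.

Lemma U_cvg (pik : nat -> strategy) pi : converges G1 pik pi ->
  (fun k => U G1 (pik k)) @ \oo --> U G1 pi.
Proof.
move=> cv; rewrite /U big_seq_cond; under eq_fun do rewrite big_seq_cond.
apply: cvg_big => [|z /andP[zN _]]; first exact: add_continuous.
by apply: cvgM; [apply: (reach_from_cvg (g := [::])) | apply: cvg_cst].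
Qed.

Lemma PI_pr1 x J : PI G1 x J = Fr G1 x J.
Proof.
apply: eq_bigl => h; rewrite /first_in; case ph: (p1node G1 h) => //=.
case: eqP => //= <-; apply/forallP => i; apply/negP => /andP[pi /eqP [_ obsE]].
by have := @size_obs1_take_lt h i (ltn_ord i) pi; rewrite obsE ltnn.
Qed.

(* The common form of EDT- and CDT-rationality in pr_1(G), where PI = Fr and the CDT
   linearisation is exact. *)
Definition Fr_rational pi := exists (pik : nat -> strategy) (eps : nat -> R),
  [/\ forall k, fully_mixed G1 (pik k),
      forall k, 0 < eps k,
      eps @ \oo --> 0,
      converges G1 pik pi &
      forall k h0, p1node G h0 -> 0 < Fr G1 (pik k) (lab h0) ->
        forall s, dist (acts N h0) s ->
          (U G1 (subst (pik k) (lab h0) s) - U G1 (pik k)) / Fr G1 (pik k) (lab h0) <= eps k].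

Lemma EDT_rational_pr1 pi : EDT_rational G1 pi <-> Fr_rational pi.
Proof.
by split=> -[pik [eps [fm e0 e_cvg cv rat]]]; exists pik, eps; split=> // k h ph;
  have := rat k h ph; rewrite PI_pr1.
Qed.

Lemma CDT_rational_pr1 pi : CDT_rational G1 pi <-> Fr_rational pi.
Proof.
by split=> -[pik [eps [fm e0 e_cvg cv rat]]]; exists pik, eps; split=> // k h ph Fp s ds;
  have := rat k h ph Fp s ds; rewrite UCDT_pr1.
Qed.

Lemma Fr_rational_optimal pi tau : Fr_rational pi -> valid G1 tau -> U G1 tau <= U G1 pi.
Proof.
move=> [pik [eps [fm e0 e_cvg cv rat]]] vt.
have bound k : U G1 tau <= U G1 (pik k) + eps k * (size N)%:R.
  by rewrite -lerBlDl; apply: U_sub_le_rational => //; [apply/ltW | apply: rat].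
have bound_cvg : (fun k => U G1 (pik k) + eps k * (size N)%:R) @ \oo --> U G1 pi.
  rewrite -[X in _ --> X]addr0 -(mul0r (size N)%:R).
  by apply: cvgD; [apply: U_cvg | apply: cvgM => //; apply: cvg_cst].
apply: (ler_cvg_to (cvg_cst (U G1 tau)) bound_cvg).
exact: nearW.
Qed.

(** * An optimal rational strategy *)

(* A pure profile assigns an action to every Player-1 node; at infoset J it is read
   at the first node labelled J, and replaced by some available action if it is not
   available there. *)
Definition label_index J := index J (map lab P1l).
Definition label_acts J := acts N (nth [::] P1l (label_index J)).

Lemma label_index_lt h : p1node G h -> (label_index (lab h) < size P1l)%N.
Proof.
by move=> ph; rewrite -(size_map lab) index_mem map_f // mem_filter ph; case/andP: ph => /andP[].
Qed.

Lemma label_index_inj h J : p1node G h -> label_index J = label_index (lab h) -> J = lab h.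
Proof.
move=> ph eJ; have hl := label_index_lt ph; rewrite -(size_map lab) in hl.
have hin : lab h \in map lab P1l by rewrite -index_mem.
have Jin : J \in map lab P1l by rewrite -index_mem -/(label_index J) eJ.
by rewrite -(nth_index (lab [::]) Jin) -(nth_index (lab [::]) hin) -/(label_index J) eJ.
Qed.

Lemma label_acts_lab h : p1node G h -> label_acts (lab h) = acts N h.
Proof.
move=> ph; have hl := label_index_lt ph.
have := mem_nth [::] hl; rewrite mem_filter => /andP[ph' _].
apply: (acts_lab ph' ph); rewrite -(nth_map _ (lab [::])) // nth_index //.
by rewrite map_f // mem_filter ph; case/andP: ph => /andP[].
Qed.

Definition profile := {ffun 'I_(size P1l) -> A}.

Definition chosen (s : profile) J : option A :=
  if insub (label_index J) is Some i then
    if s i \in label_acts J then Some (s i) else [pick a in label_acts J]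
  else None.

Definition perturbed (s : profile) (d : R) : strategy := fun J a =>
  if chosen s J is Some e then
    if a \in label_acts J then d + (1 - #|label_acts J|%:R * d) * (a == e)%:R else 0
  else 0.

Lemma chosen_p1 s h : p1node G h -> exists2 e, chosen s (lab h) = Some e & e \in acts N h.
Proof.
move=> ph; rewrite /chosen insubT ?label_index_lt // => hl /=; rewrite label_acts_lab //.
case: ifP => [sa|_]; first by exists (s (Ordinal hl)).
case: pickP => [a ah|none]; first by exists a.
by case/andP: ph => /andP[_ /set0Pn[a ah]] _; have := none a; rewrite ah.
Qed.

Lemma perturbed_at s d h e a : p1node G h -> chosen s (lab h) = Some e ->
  perturbed s d (lab h) a =
  if a \in acts N h then d + (1 - #|acts N h|%:R * d) * (a == e)%:R else 0.
Proof. by move=> ph che; rewrite /perturbed che label_acts_lab. Qed.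

Lemma card_acts_mul_le h (d : R) : 0 <= d -> #|acts N h|%:R * d <= #|A|%:R * d.
Proof. by move=> d0; rewrite ler_wpM2r // ler_nat max_card. Qed.

Lemma perturbed_valid s d : 0 <= d -> #|A|%:R * d <= 1 -> valid G1 (perturbed s d).
Proof.
move=> d0 d1 h ph; have [e che eh] := chosen_p1 s ph.
have nd1 : #|acts N h|%:R * d <= 1 := le_trans (card_acts_mul_le h d0) d1.
split=> [a ah|]; first by rewrite (perturbed_at _ _ ph che) ah addr_ge0 ?mulr_ge0 ?subr_ge0.
rewrite (eq_bigr (fun a => d + (a == e)%:R * (1 - #|acts N h|%:R * d))); last first.
  by move=> a ah; rewrite (perturbed_at _ _ ph che) ah mulrC.
by rewrite big_split /= sumr_const sum_indicator // -[d *+ _]mulr_natl addrC subrK.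
Qed.

Lemma perturbed_fully_mixed s d : 0 < d -> #|A|%:R * d < 1 -> fully_mixed G1 (perturbed s d).
Proof.
move=> d0 d1; split; first by apply: perturbed_valid; rewrite ltW.
move=> h a ph ah; have [e che eh] := chosen_p1 s ph.
have nd1 : #|acts N h|%:R * d < 1 := le_lt_trans (card_acts_mul_le h (ltW d0)) d1.
by rewrite /= (perturbed_at _ _ ph che) ah ltr_wpDr ?mulr_ge0 // subr_ge0 ltW.
Qed.

Definition reassign (s : profile) (i : 'I_(size P1l)) (b : A) : profile :=
  [ffun j => if j == i then b else s j].

Lemma chosen_reassign_other s i b h0 J : p1node G h0 -> val i = label_index (lab h0) ->
  J != lab h0 -> chosen (reassign s i b) J = chosen s J.
Proof.
move=> p0 ih0 Jh0; rewrite /chosen; case: insubP => [j _ jJ|_] //.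
rewrite ffunE; case: eqP => // ji; move: Jh0.
by rewrite (label_index_inj p0 (J := J)) ?eqxx // -jJ ji.
Qed.

Lemma chosen_reassign_self s i b h0 : p1node G h0 -> val i = label_index (lab h0) ->
  b \in acts N h0 -> chosen (reassign s i b) (lab h0) = Some b.
Proof.
move=> p0 ih0 bh0; rewrite /chosen insubT ?label_index_lt // => hl /=.
rewrite ffunE; case: eqP => [_|/eqP]; first by rewrite label_acts_lab ?bh0.
by rewrite -val_eqE /= ih0 eqxx.
Qed.

Section BestPerturbed.
Variables (s : profile) (d : R).
Hypotheses (d_gt0 : 0 < d) (d_lt1 : #|A|%:R * d < 1).
Hypothesis s_best : forall s', U G1 (perturbed s' d) <= U G1 (perturbed s d).
Local Notation x := (perturbed s d).

Lemma best_marginal h0 e b : p1node G h0 -> chosen s (lab h0) = Some e -> b \in acts N h0 ->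
  marginal x (lab h0) b <= marginal x (lab h0) e.
Proof.
move=> p0 che bh0; set J := lab h0; set n : R := #|acts N h0|%:R.
have [e' che' eh] := chosen_p1 s p0; rewrite che in che'; case: che' => <- in eh.
have nd1 : n * d < 1 := le_lt_trans (card_acts_mul_le h0 (ltW d_gt0)) d_lt1.
pose s' := reassign s (Ordinal (label_index_lt p0)) b.
have chb : chosen s' J = Some b by apply: chosen_reassign_self.
have U' : U G1 (perturbed s' d) = U G1 (subst x J (perturbed s' d J)).
  apply: eq_U => g pg; rewrite /subst; case: eqP => [->//|/eqP gJ].
  by rewrite /perturbed (chosen_reassign_other _ _ p0 _ gJ).
have := s_best s'; rewrite U' -subr_le0 U_subst_sub_marginal //.
rewrite (eq_bigr (fun a => (1 - n * d) *
    ((a == b)%:R * marginal x J a - (a == e)%:R * marginal x J a))); last first.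
  by move=> a ah; rewrite (perturbed_at _ _ p0 chb) (perturbed_at _ _ p0 che) ah; ring.
by rewrite -mulr_sumr sumrB !sum_indicator // pmulr_rle0 ?subr_gt0 // subr_le0.
Qed.

Lemma best_gain_le h0 sd : p1node G h0 -> dist (acts N h0) sd ->
  U G1 (subst x (lab h0) sd) - U G1 x <= #|A|%:R * d * util_total * Fr G1 x (lab h0).
Proof.
move=> p0 [sd0 sd1]; set J := lab h0; set n : R := #|acts N h0|%:R.
have [e che eh] := chosen_p1 s p0.
have vx : valid G1 x by apply: perturbed_valid; rewrite ltW.
have M0 a : 0 <= marginal x J a.
  rewrite /marginal big_seq_cond sumr_ge0 // => h /andP[hN _].
  rewrite mulr_ge0 //; first by case/andP: (reach_from_ge0_le1 vx (g := [::]) hN).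
  by case/andP: (@cont_value_ge0_le _ h a vx).
have Me : marginal x J e <= util_total * Fr G1 x J.
  rewrite Fr_pr1 mulr_sumr /marginal big_seq_cond [X in _ <= X]big_seq_cond.
  apply: ler_sum => h /andP[hN _]; rewrite mulrC ler_wpM2r //.
    by case/andP: (reach_from_ge0_le1 vx (g := [::]) hN).
  by case/andP: (@cont_value_ge0_le _ h e vx).
have sdM : \sum_(a in acts N h0) sd a * marginal x J a <= marginal x J e.
  rewrite -[X in _ <= X]mul1r -sd1 mulr_suml; apply: ler_sum => a ah.
  by rewrite ler_wpM2l ?sd0 ?(best_marginal p0 che).
have xM : (1 - n * d) * marginal x J e <= \sum_(a in acts N h0) x J a * marginal x J a.
  rewrite (eq_bigr (fun a => d * marginal x J a + (a == e)%:R * ((1 - n * d) * marginal x J a))).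
    by rewrite big_split /= sum_indicator // lerDr sumr_ge0 // => a _; rewrite mulr_ge0 ?M0 ?ltW.
  by move=> a ah; rewrite (perturbed_at _ _ p0 che) ah; ring.
rewrite U_subst_sub_marginal // (eq_bigr (fun a => sd a * marginal x J a - x J a * marginal x J a));
  last by move=> a _; rewrite mulrBl.
rewrite sumrB; apply: (@le_trans _ _ (n * d * marginal x J e)).
  by move: sdM xM; rewrite mulrBl mul1r; lra.
apply: (@le_trans _ _ (#|A|%:R * d * marginal x J e)).
  by rewrite ler_wpM2r ?M0 // card_acts_mul_le // ltW.
by rewrite -[X in _ <= X]mulrA ler_wpM2l // mulr_ge0 ?ler0n // ltW.
Qed.

End BestPerturbed.

Lemma util_total_ge0 : 0 <= util_total.
Proof. by rewrite /util_total big_seq_cond sumr_ge0 // => z /andP[_ lz]; apply: util_ge0. Qed.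

Lemma best_profile_exists d :
  exists s : profile, forall s', U G1 (perturbed s' d) <= U G1 (perturbed s d).
Proof.
have /card_gt0P[s0 _] : (0 < #|{: profile}|)%N.
  rewrite card_ffun card_ord expn_gt0 orbC; case: eqP => //= /eqP; rewrite -lt0n => P1l_gt0.
  have := mem_nth [::] P1l_gt0; rewrite mem_filter => /andP[/andP[/andP[_ /set0Pn[a _]] _] _].
  by apply/card_gt0P; exists a.
case: (@arg_maxP _ _ _ s0 predT (fun s => U G1 (perturbed s d))) => // s _ smax.
by exists s => s'; apply: smax.
Qed.

Lemma perturbed_cvg s (dk : nat -> R) : dk @ \oo --> 0 ->
  converges G1 (fun k => perturbed s (dk k)) (perturbed s 0).
Proof.
move=> dk0 h a ph ah; have {}ph : p1node G h := ph; have [e che _] := chosen_p1 s ph.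
rewrite (perturbed_at _ _ ph che); under eq_fun do rewrite (perturbed_at _ _ ph che).
case: ifP => _; last exact: cvg_cst.
apply: cvgD => //; apply: cvgM; last exact: cvg_cst.
by apply: cvgB; [apply: cvg_cst | apply: cvgM => //; apply: cvg_cst].
Qed.

Definition tremble (k : nat) : R := ((k + #|A|).+1)%:R^-1.

Lemma tremble_gt0 k : 0 < tremble k.
Proof. by rewrite invr_gt0 ltr0n. Qed.

Lemma tremble_lt1 k : #|A|%:R * tremble k < 1.
Proof. by rewrite ltr_pdivrMr ?ltr0n // mul1r ltr_nat ltnS leq_addl. Qed.

Lemma tremble_cvg (g : nat -> nat) : (forall j, (j <= g j)%N) ->
  (fun j => tremble (g j)) @ \oo --> 0.
Proof.
move=> jg; apply: (@squeeze_cvgr _ _ _ _ (fun=> 0) harmonic); last exact: cvg_harmonic.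
  apply: nearW => j; rewrite ltW ?tremble_gt0 //= lef_pV2 ?posrE ?ltr0n // ler_nat ltnS.
  exact: leq_trans (jg j) (leq_addr _ _).
exact: cvg_cst.
Qed.

(* Some profile is a best trembling profile for infinitely many trembles; along those
   trembles it witnesses the rationality of its untrembled limit. *)
Lemma Fr_rational_exists : exists pi, valid G1 pi /\ Fr_rational pi.
Proof.
have [best best_max] := choice (fun k => best_profile_exists (tremble k)).
have [s /choice[g gs]] := finite_recurrent best.
exists (perturbed s 0); split; first by apply: perturbed_valid; rewrite ?mulr0.
set C := #|A|%:R * util_total + 1.
have C_gt0 : 0 < C by rewrite ltr_pwDr // mulr_ge0 ?util_total_ge0.
exists (fun j => perturbed s (tremble (g j))), (fun j => tremble (g j) * C); split.
- by move=> j; apply: perturbed_fully_mixed; [apply: tremble_gt0 | apply: tremble_lt1].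
- by move=> j; rewrite mulr_gt0 ?tremble_gt0.
- by rewrite -(mul0r C); apply: cvgM; [apply: tremble_cvg => j; case: (gs j) | apply: cvg_cst].
- by apply: perturbed_cvg; apply: tremble_cvg => j; case: (gs j).
move=> j h0 p0 Fr_gt0 sd sd_dist; rewrite ler_pdivrMr //.
have [_ gjs] := gs j; have s_best := best_max (g j); rewrite gjs in s_best.
apply: le_trans (best_gain_le (tremble_gt0 _) (tremble_lt1 _) s_best p0 sd_dist) _.
by rewrite ler_pM2r // /C; have := tremble_gt0 (g j); nra.
Qed.

(** * Equilibrium values *)

Definition optimal pi := valid G1 pi /\ forall tau, valid G1 tau -> U G1 tau <= U G1 pi.

Lemma subst_valid x h s : valid G1 x -> p1node G h -> dist (acts N h) s ->
  valid G1 (subst x (lab h) s).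
Proof.
move=> vx ph ds g pg; rewrite /subst; case: eqP => [gh|_]; last exact: vx.
by rewrite (@acts_lab g h pg ph gh).
Qed.

Lemma optimal_EDT_eq pi : optimal pi -> EDT_eq G1 pi.
Proof. by move=> [vpi pi_max]; split=> // h ph s ds; apply/pi_max/subst_valid. Qed.

Lemma optimal_complementary_slackness pi h0 b : optimal pi -> p1node G h0 -> b \in acts N h0 ->
  (forall a, a \in acts N h0 -> dU G1 pi (lab h0) a <= dU G1 pi (lab h0) b) ->
  forall a, a \in acts N h0 -> pi (lab h0) a * (dU G1 pi (lab h0) b - dU G1 pi (lab h0) a) = 0.
Proof.
move=> [vpi pi_max] p0 bh0 bmax; set J := lab h0; set D := dU G1 pi J.
have [pi0 pi1] := vpi h0 p0.
have gap0 a : a \in acts N h0 -> 0 <= pi J a * (D b - D a).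
  by move=> ah; rewrite mulr_ge0 ?pi0 // subr_ge0 bmax.
apply: (psumr_eq0P gap0); apply/le_anti; rewrite sumr_ge0 // andbT.
have := pi_max _ (subst_valid vpi p0 (dist_indicator R bh0)).
rewrite -subr_le0 (U_subst_sub_marginal _ _ p0); under eq_bigr => a ah do rewrite -dU_pr1 //.
rewrite (eq_bigr (fun a => (a == b)%:R * D a - pi J a * D a)); last by move=> a _; rewrite mulrBl.
rewrite sumrB sum_indicator // => gain_le0.
by rewrite (eq_bigr (fun a => pi J a * D b - pi J a * D a)) ?sumrB -?mulr_suml ?pi1 ?mul1r //
  => a _; rewrite mulrBr.
Qed.

Lemma optimal_CDT_eq pi : optimal pi -> CDT_eq G1 pi.
Proof.
move=> opt; split; first by case: opt.
have kkt J : exists lm : R * (A -> R), forall h, p1node G h -> lab h = J ->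
    forall a, a \in acts N h ->
    [/\ 0 <= lm.2 a, lm.2 a * pi J a = 0 & dU G1 pi J a + lm.2 a - lm.1 = 0].
  have [[h0 [p0 <-]]|noJ] := pselect (exists h0, p1node G h0 /\ lab h0 = J); last first.
    by exists (0, fun=> 0) => h ph hJ; case: noJ; exists h.
  set D := dU G1 pi (lab h0).
  have [b0 b0h0] : exists b0, b0 \in acts N h0 by case/andP: p0 => /andP[_ /set0Pn].
  case: (@arg_maxP _ _ _ b0 (mem (acts N h0)) D b0h0) => b bh0 bmax.
  exists (D b, fun a => D b - D a) => h ph hJ a; rewrite (acts_lab ph p0 hJ) => ah /=.
  split; [by rewrite subr_ge0; apply: bmax | | by ring].
  by rewrite mulrC (optimal_complementary_slackness opt p0 bh0 bmax).
have [lm lmP] := choice kkt.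
by exists (fun J => (lm J).1), (fun J => (lm J).2) => h ph a ah; apply: (lmP _ h ph erefl).
Qed.

Lemma U_realization_equiv x y : realization_equiv G1 x y -> U G1 x = U G1 y.
Proof.
move=> xy; rewrite /U big_seq_cond [RHS]big_seq_cond.
by apply: eq_bigr => z /andP[zN _]; rewrite xy.
Qed.

Definition lift (p : I -> A -> R) : strategy := fun J => p J.1.

Lemma valid_lift p : valid G p -> valid G1 (lift p).
Proof. by move=> vp h; apply: vp. Qed.

Lemma U_lift p : U G p = U G1 (lift p).
Proof.
have rf g r : reach_from G p g r = reach_from G1 (lift p) g r.
  by elim: r g => [|a r IH] g //=; rewrite IH.
by apply: eq_bigr => z _; rewrite /reach rf.
Qed.

Lemma U_ge0 x : valid G1 x -> 0 <= U G1 x.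
Proof.
move=> vx; rewrite /U big_seq_cond sumr_ge0 // => z /andP[zN lz].
rewrite mulr_ge0 ?util_ge0 //; exact: (proj1 (andP (reach_from_ge0_le1 vx (g := [::]) zN))).
Qed.

Lemma optimal_EDT_Nash pi : optimal pi -> Fr_rational pi -> EDT_Nash G1 pi.
Proof.
by move=> opt rat; split; [apply: optimal_EDT_eq | exists pi; split=> //; apply/EDT_rational_pr1].
Qed.

Lemma optimal_CDT_Nash pi : optimal pi -> Fr_rational pi -> CDT_Nash G1 pi.
Proof.
by move=> opt rat; split; [apply: optimal_CDT_eq | exists pi; split=> //; apply/CDT_rational_pr1].
Qed.

Lemma EDT_Nash_rational pi : EDT_Nash G1 pi ->
  valid G1 pi /\ exists pi', realization_equiv G1 pi pi' /\ Fr_rational pi'.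
Proof. by move=> [[vpi _] [pi' [re rat]]]; split=> //; exists pi'; rewrite -EDT_rational_pr1. Qed.

Lemma CDT_Nash_rational pi : CDT_Nash G1 pi ->
  valid G1 pi /\ exists pi', realization_equiv G1 pi pi' /\ Fr_rational pi'.
Proof. by move=> [[vpi _] [pi' [re rat]]]; split=> //; exists pi'; rewrite -CDT_rational_pr1. Qed.

Lemma eq_values_pr1 (P : efg A (I * seq (I * A))%type R -> strategy -> Prop) pis :
  optimal pis -> P G1 pis ->
  (forall pi, P G1 pi ->
     valid G1 pi /\ exists pi', realization_equiv G1 pi pi' /\ Fr_rational pi') ->
  eq_values G1 P = [set U G1 pis].
Proof.
move=> [vpis pis_max] Ppis Prat; apply/seteqP; split=> [r [pi [Ppi <-]]|r ->]; last by exists pis.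
have [vpi [pi' [re rat]]] := Prat pi Ppi.
by apply/le_anti; rewrite pis_max //= (U_realization_equiv re) Fr_rational_optimal.
Qed.

Lemma eq_values_bounded (P : efg A I R -> (I -> A -> R) -> Prop) pis :
  optimal pis -> (forall p, P G p -> valid G p) ->
  forall r, eq_values G P r -> 0 <= r <= U G1 pis.
Proof.
move=> [_ pis_max] Pvalid r [p [/Pvalid vp <-]].
by rewrite U_lift U_ge0 ?pis_max //; apply: valid_lift.
Qed.

Lemma sc_value_pr1 c pis : optimal pis -> Fr_rational pis -> sc_value c G1 = U G1 pis.
Proof.
move=> opt rat; have CDT := eq_values_pr1 opt (optimal_CDT_Nash opt rat) CDT_Nash_rational.
have EDT := eq_values_pr1 opt (optimal_EDT_Nash opt rat) EDT_Nash_rational.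
by case: c; rewrite /sc_value ?CDT ?EDT ?inf1 ?sup1.
Qed.

Lemma sc_value_le c pis : optimal pis -> 0 <= sc_value c G <= U G1 pis.
Proof.
move=> opt; have OPT0 : 0 <= U G1 pis by apply/U_ge0; case: opt.
have CDT := eq_values_bounded opt (fun p (Np : CDT_Nash G p) => proj1 (proj1 Np)).
have EDT := eq_values_bounded opt (fun p (Np : EDT_Nash G p) => proj1 (proj1 Np)).
by case: c; rewrite /sc_value; [apply: inf_ge0_le | apply: sup_ge0_le | apply: inf_ge0_le
  | apply: sup_ge0_le].
Qed.

End Refinement.

Theorem corollary2 (A : finType) (I : eqType) (R : realType)
  (G : efg A I R) (c : SC) :
  (1 <= VoR c G)%E.
Proof.
have [pis [vpis rat]] := Fr_rational_exists G.
have opt : optimal G pis by split=> // tau; apply: Fr_rational_optimal.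
by rewrite /VoR (sc_value_pr1 c opt rat); apply/ratio_ge1/sc_value_le.
Qed.
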